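(* Let $\mathbb{F}$ be a field, $n\geq 1$, and let $\theta$ be a symplectic polarity of the projective space $\Delta=\mathsf{PG}(2n-1,\mathbb{F})$, viewed as a building of type $\mathsf{A}_{2n-1}$. Then for each odd $i$, no vertex of type $i$ is mapped by $\theta$ to an opposite vertex; and each vertex mapped to an opposite vertex is contained in a simplex of type $\{2,4,\ldots,2n-2\}$ that is mapped to an opposite simplex.
   Context: Vertices of type $i$ ($1\leq i\leq 2n-1$) of $\mathsf{PG}(2n-1,\mathbb{F})$ are the $i$-dimensional subspaces of $V=\mathbb{F}^{2n}$; simplices are flags. Two subspaces $U,U'$ are opposite iff $U+U'=V$ and $U\cap U'=0$; flags are opposite iff their members are pairwise opposite in this sense with complementary dimensions (equivalently, as simplices of the building). A symplectic polarity is a duality of the form $U^\theta=U^{\circ}=\{v: (u,v)=0\ \forall u\in U\}$ for a nondegenerate alternating form $(\cdot,\cdot)$ on $V$. *)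

(* Subspaces of V = F^m are represented by square matrices
   'M[F]_m through their row space (mxalgebra, scope %MS). *)
From HB Require Import structures.
From mathcomp Require Import all_boot all_order all_algebra.
Set Implicit Arguments. Unset Strict Implicit. Unset Printing Implicit Defensive.
Import GRing.Theory.
Local Open Scope ring_scope.

Section Defs.
Variables (F : fieldType) (m : nat).

Definition opposite_sub (U W : 'M[F]_m) : bool :=
  ((U + W)%MS == (1%:M : 'M[F]_m))%MS && (\rank (U :&: W)%MS == 0)%N.

Definition is_vertex (U : 'M[F]_m) : bool := (0 < \rank U < m)%N.

(* A simplex = a flag: a strictly increasing chain of proper nonzero
   subspaces (listed in increasing order). Its type is the set of ranks. *)
Definition is_flag (s : seq 'M[F]_m) : bool :=
  all is_vertex s && sorted (fun A B => (A < B)%MS) s.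

Definition opposite_flag (s t : seq 'M[F]_m) : Prop :=
  size s = size t /\
  (forall A, A \in s -> exists2 B, B \in t & (\rank A + \rank B = m)%N /\ opposite_sub A B) /\
  (forall B, B \in t -> exists2 A, A \in s & (\rank A + \rank B = m)%N /\ opposite_sub A B).

Definition alternating_nondeg (J : 'M[F]_m) : Prop :=
  (forall v : 'rV[F]_m, (v *m J *m v^T) 0 0 = 0) /\ J \in unitmx.

(* The symplectic polarity: U^theta = {v | (u,v) = 0 for all u in U},
   i.e. the rows v with v *m J^T *m U^T = 0. *)
Definition sp_polarity (J : 'M[F]_m) (U : 'M[F]_m) : 'M[F]_m :=
  kermx (J^T *m U^T).

End Defs.

(* The form is nondegenerate on W exactly when W and its polar W^perp are
   opposite.  A nonzero nondegenerate W contains a pair u, w with (u, w) <> 0;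
   it spans a nondegenerate plane H, and W = H (+) (W cap H^perp) with the
   second summand again nondegenerate.  Hence nondegenerate subspaces have even
   dimension, and splitting off planes inside W, or inside W^perp and taking
   polars, gives nondegenerate subspaces of dimensions 2, 4, ..., 2n-2 through
   W.  They form a flag, and every member of it is opposite to its polar. *)

From mathcomp Require Import all_boot all_order all_algebra zify.
Set Implicit Arguments. Unset Strict Implicit. Unset Printing Implicit Defensive.
Import GRing.Theory.
Local Open Scope ring_scope.

Section SymplecticSpace.
Variables (F : fieldType) (m : nat) (J : 'M[F]_m).
Hypothesis J_alt : alternating_nondeg J.

Lemma alternating_skew : J^T = - J.
Proof.
have form_delta (i j : 'I_m) :
    ((delta_mx 0 i : 'rV[F]_m) *m J *m (delta_mx 0 j : 'rV[F]_m)^T) 0 0 = J i j.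
  by rewrite trmx_delta -rowE -colE !mxE.
have skew (u v : 'rV[F]_m) : (u *m J *m v^T) 0 0 = - (v *m J *m u^T) 0 0.
  apply/eqP; rewrite -addr_eq0; have := J_alt.1 (u + v).
  rewrite linearD /= !mulmxDl !mulmxDr ![((_ + _)%R : 'M_1) 0 0]mxE !J_alt.1.
  by rewrite add0r addr0 => ->.
by apply/matrixP => i j; rewrite !mxE -!form_delta skew.
Qed.

Definition perp {p} (A : 'M[F]_(p, m)) : 'M[F]_m := kermx (J^T *m A^T).

Lemma sp_polarityE (U : 'M[F]_m) : sp_polarity J U = perp U.
Proof. by []. Qed.

Lemma sub_perp p q (A : 'M[F]_(p, m)) (B : 'M[F]_(q, m)) :
  (A <= perp B)%MS = (A *m J^T *m B^T == 0).
Proof. by rewrite sub_kermx mulmxA. Qed.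

Lemma sub_perpC p q (A : 'M[F]_(p, m)) (B : 'M[F]_(q, m)) :
  (A <= perp B)%MS = (B <= perp A)%MS.
Proof.
rewrite !sub_perp -trmx_eq0 !trmx_mul !trmxK -mulmxA.
by rewrite -{1}[J]opprK -alternating_skew mulNmx mulmxN oppr_eq0 mulmxA.
Qed.

Lemma rV_sub_perp (u : 'rV[F]_m) : (u <= perp u)%MS.
Proof.
rewrite sub_perp alternating_skew mulmxN mulNmx oppr_eq0.
by apply/eqP/matrixP => i j; rewrite !ord1 J_alt.1 mxE.
Qed.

Lemma mxrank_perp p (A : 'M[F]_(p, m)) : \rank (perp A) = (m - \rank A)%N.
Proof.
rewrite mxrank_ker -mxrank_tr trmx_mul !trmxK mxrankMfree //.
by rewrite row_free_unit; case: J_alt.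
Qed.

Lemma sub_perpK p (A : 'M[F]_(p, m)) : (A <= perp (perp A))%MS.
Proof. by rewrite sub_perpC. Qed.

Lemma perpS p q (A : 'M[F]_(p, m)) (B : 'M[F]_(q, m)) :
  (A <= B)%MS -> (perp B <= perp A)%MS.
Proof. by move=> sAB; rewrite sub_perpC (submx_trans sAB) ?sub_perpK. Qed.

Lemma perpK p (A : 'M[F]_(p, m)) : (perp (perp A) :=: A)%MS.
Proof.
apply/eqmx_sym/eqmxP; rewrite -(mxrank_leqif_eq (sub_perpK A)).
by rewrite !mxrank_perp subKn ?rank_leq_col.
Qed.

Lemma sub_perp_adds p q r
    (A : 'M[F]_(p, m)) (B : 'M[F]_(q, m)) (C : 'M[F]_(r, m)) :
  (C <= perp (A + B)%MS)%MS = (C <= perp A)%MS && (C <= perp B)%MS.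
Proof. by rewrite !(sub_perpC C) addsmx_sub. Qed.

Definition nondeg {p} (A : 'M[F]_(p, m)) : bool := \rank (A :&: perp A) == 0%N.

Lemma nondegP p (A : 'M[F]_(p, m)) :
  reflect (forall q (x : 'M[F]_(q, m)), (x <= A)%MS -> (x <= perp A)%MS -> x = 0)
          (nondeg A).
Proof.
rewrite /nondeg mxrank_eq0; apply: (iffP eqP) => [A0 q x xA xAp | A0].
  by apply/eqP; rewrite -submx0 -A0 sub_capmx xA.
by apply: A0; rewrite ?capmxSl ?capmxSr.
Qed.

Lemma nondeg_adds_perp p (A : 'M[F]_(p, m)) :
  nondeg A -> (A + perp A :=: 1%:M)%MS.
Proof.
move=> ndA; apply/eqmxP; rewrite submx1 sub1mx /row_full.
rewrite mxrank_disjoint_sum ?mxrank_perp ?subnKC ?rank_leq_col ?eqxx //.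
by apply/eqP; rewrite -mxrank_eq0.
Qed.

Lemma opposite_perp (W : 'M[F]_m) : opposite_sub W (perp W) = nondeg W.
Proof.
rewrite /opposite_sub -/(nondeg W); case ndW: (nondeg W); rewrite ?andbF //.
by rewrite andbT; apply/eqmxP/nondeg_adds_perp.
Qed.

Lemma nondeg_perp p (A : 'M[F]_(p, m)) : nondeg A -> nondeg (perp A).
Proof.
move=> /nondegP ndA; apply/nondegP => q x xAp; rewrite perpK => xA.
exact: ndA.
Qed.

Lemma rV_capmx_eq0 (u : 'rV[F]_m) (B : 'M[F]_m) :
  ~~ (u <= B)%MS -> (u :&: B)%MS = 0.
Proof.
move=> uB; apply/eqP; rewrite -mxrank_eq0 -leqn0 -ltnS.
apply: leq_trans (rank_leq_row u).
by rewrite (ltn_leqif (mxrank_leqif_sup (capmxSl u B))) sub_capmx submx_refl.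
Qed.

Section HyperbolicPair.
Variables u w : 'rV[F]_m.
Hypothesis uw : ~~ (u <= perp w)%MS.

Lemma nondeg_hyperbolic : nondeg (u + w)%MS.
Proof.
have wu : ~~ (w <= perp u)%MS by rewrite sub_perpC.
apply/nondegP => q x /sub_addsmxP[[a b] /= ->].
rewrite sub_perp_adds => /andP[xu xw].
have iso q' (c : 'M[F]_(q', 1)) (v : 'rV[F]_m) : (c *m v <= perp v)%MS.
  exact: submx_trans (submxMl c v) (rV_sub_perp v).
have au0 : a *m u = 0.
  apply/eqP; rewrite -submx0 -(rV_capmx_eq0 uw) sub_capmx submxMl /=.
  by rewrite -[a *m u](addrK (b *m w)) addmx_sub // eqmx_opp iso.
have bw0 : b *m w = 0.
  apply/eqP; rewrite -submx0 -(rV_capmx_eq0 wu) sub_capmx submxMl /=.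
  by rewrite -[b *m w](addKr (a *m u)) addmx_sub // eqmx_opp iso.
by rewrite au0 bw0 addr0.
Qed.

Lemma mxrank_hyperbolic : \rank (u + w)%MS = 2%N.
Proof.
have w0 : w != 0.
  by apply: contraNneq uw => ->; rewrite /perp trmx0 mulmx0 kermx0 submx1.
have wu : ~~ (u <= w)%MS.
  by apply: contra uw => /submx_trans; apply; apply: rV_sub_perp.
apply/eqP; rewrite eqn_leq; apply/andP; split.
  apply: leq_trans (mxrank_adds_leqif u w).1 _.
  by rewrite !rank_rV (leq_add (leq_b1 _) (leq_b1 _)).
have: (w < u + w)%MS by rewrite ltmxE addsmxSr addsmx_sub negb_and wu.
by move/rank_ltmx; rewrite rank_rV w0.
Qed.

End HyperbolicPair.

Lemma nondeg_sub_hyperbolic (W : 'M[F]_m) : nondeg W -> (0 < \rank W)%N ->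
  exists H : 'M[F]_m, [/\ (H <= W)%MS, nondeg H & \rank H = 2%N].
Proof.
move=> /nondegP ndW W_gt0; set u := nz_row W.
have uW : (u <= W)%MS := nz_row_sub W.
have /row_subPn[i] : ~~ (W <= perp u)%MS.
  apply: contraTN W_gt0; rewrite -sub_perpC => /(ndW _ u uW)/eqP.
  by rewrite nz_row_eq0 -mxrank_eq0 => /eqP->.
rewrite sub_perpC => uw; exists (u + row i W)%MS.
by rewrite addsmx_sub uW row_sub nondeg_hyperbolic ?mxrank_hyperbolic.
Qed.

Section OrthogonalComplement.
Variables H W : 'M[F]_m.
Hypotheses (sHW : (H <= W)%MS) (ndH : nondeg H).

Lemma adds_cap_perp : (H + (perp H :&: W) :=: W)%MS.
Proof.
apply: eqmx_trans (matrix_modl _ sHW) _; rewrite -{2}[W]cap1mx.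
exact: cap_eqmx (nondeg_adds_perp ndH) (eqmx_refl W).
Qed.

Lemma mxrank_cap_perp : (\rank (perp H :&: W) + \rank H)%N = \rank W.
Proof.
rewrite -adds_cap_perp mxrank_disjoint_sum 1?addnC //.
apply: (elimT (nondegP H) ndH); first exact: capmxSl.
exact: submx_trans (capmxSr _ _) (capmxSl _ _).
Qed.

Lemma nondeg_cap_perp : nondeg W -> nondeg (perp H :&: W)%MS.
Proof.
move=> /nondegP ndW; apply/nondegP => q x xW' xW'p.
have xHp : (x <= perp H)%MS := submx_trans xW' (capmxSl _ _).
apply: ndW; first exact: submx_trans xW' (capmxSr _ _).
have /eqmxP/andP[_ sW_HW'] := adds_cap_perp.
rewrite sub_perpC; apply: submx_trans sW_HW' _.
by rewrite addsmx_sub -!(sub_perpC x) xHp.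
Qed.

End OrthogonalComplement.

Lemma nondeg_split (W : 'M[F]_m) : nondeg W -> (0 < \rank W)%N ->
  exists W' : 'M[F]_m, [/\ nondeg W', (W' <= W)%MS & (\rank W' + 2 = \rank W)%N].
Proof.
move=> ndW /(nondeg_sub_hyperbolic ndW)[H [sHW ndH rkH]].
exists (perp H :&: W)%MS; rewrite capmxSr nondeg_cap_perp //.
by rewrite -rkH mxrank_cap_perp.
Qed.

Lemma nondeg_extend (W : 'M[F]_m) : nondeg W -> (\rank W + 2 <= m)%N ->
  exists W' : 'M[F]_m, [/\ nondeg W', (W <= W')%MS & \rank W' = (\rank W + 2)%N].
Proof.
move=> ndW rkW; have rkWp : (0 < \rank (perp W))%N.
  by rewrite mxrank_perp subn_gt0 (leq_trans _ rkW) ?addn2.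
have [Z [ndZ sZWp rkZ]] := nondeg_split (nondeg_perp ndW) rkWp.
exists (perp Z); split; first exact: nondeg_perp.
  by rewrite -{1}(perpK W) perpS.
by move: rkZ; rewrite !mxrank_perp; lia.
Qed.

Lemma nondeg_rank_even (W : 'M[F]_m) : nondeg W -> ~~ odd (\rank W).
Proof.
have [k] := ubnP (\rank W); elim: k W => // k IH W rkW ndW.
have [-> //|W_gt0] := posnP (\rank W).
have [W' [ndW' _ rkW']] := nondeg_split ndW W_gt0.
rewrite -rkW' addn2 /= negbK; apply: IH ndW'; lia.
Qed.

Lemma nondeg_chain_below j (W : 'M[F]_m) : nondeg W -> \rank W = (j.+1).*2 ->
  exists c : seq 'M[F]_m, [/\ all nondeg c,
    map mxrank c = [seq (i.+1).*2 | i <- iota 0 j] & sorted ltmx (rcons c W)].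
Proof.
elim: j W => [|j IH] W ndW rkW; first by exists [::].
have [W' [ndW' sW'W rkW']] := nondeg_split ndW (ltac:(lia) : 0 < \rank W)%N.
have [|c [ndc rkc sc]] := IH W' ndW'; first lia.
exists (rcons c W'); split.
- by rewrite all_rcons ndW' ndc.
- by rewrite map_rcons rkc -addn1 iotaD map_cat cats1 add0n; congr rcons; lia.
- by rewrite -cats1 cat_rcons sorted_cat_cons sc /= andbT ltmxErank sW'W; lia.
Qed.

Lemma nondeg_chain_above j k (W : 'M[F]_m) : nondeg W -> \rank W = k.*2 ->
  ((k + j).*2 + 2 <= m)%N ->
  exists c : seq 'M[F]_m, [/\ all nondeg c,
    map mxrank c = [seq (i.+1).*2 | i <- iota k j] & path ltmx W c].
Proof.
elim: j k W => [|j IH] k W ndW rkW le_m; first by exists [::].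
have [W' [ndW' sWW' rkW']] := nondeg_extend ndW (ltac:(lia) : \rank W + 2 <= m)%N.
have [||c [ndc rkc pc]] := IH k.+1 W' ndW'; try lia.
exists (W' :: c); split.
- by rewrite /= ndW' ndc.
- by rewrite /= rkc; congr cons; lia.
- by rewrite /= pc andbT ltmxErank sWW'; lia.
Qed.

Lemma nondeg_rank_double (W : 'M[F]_m) : nondeg W -> (0 < \rank W)%N ->
  exists k, \rank W = (k.+1).*2.
Proof.
move=> /nondeg_rank_even rk_even rk_gt0; exists (\rank W)./2.-1.
by have := odd_double_half (\rank W); rewrite (negbTE rk_even); lia.
Qed.

Lemma nondeg_flag_through n (U : 'M[F]_m) : m = n.*2 -> nondeg U ->
  (0 < \rank U < m)%N ->
  exists s : seq 'M[F]_m, [/\ all nondeg s, sorted ltmx s, U \in s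
    & map mxrank s = [seq (k.+1).*2 | k <- iota 0 n.-1]].
Proof.
move=> m_double ndU /andP[rkU_gt0 rkU_lt].
have [k rkU] := nondeg_rank_double ndU rkU_gt0.
have [c1 [nd1 rk1 sorted1]] := nondeg_chain_below ndU rkU.
have [||c2 [nd2 rk2 path2]] := @nondeg_chain_above (n.-1 - k.+1) k.+1 U ndU;
  try lia.
exists (c1 ++ U :: c2); split.
- by rewrite all_cat /= nd1 ndU nd2.
- by rewrite sorted_cat_cons sorted1 path2.
- by rewrite mem_cat mem_head orbT.
- have -> : n.-1 = (k + (n.-1 - k.+1).+1)%N by lia.
  by rewrite map_cat /= rk1 rk2 rkU iotaD map_cat.
Qed.

Lemma opposite_flag_perp (s : seq 'M[F]_m) :
  all nondeg s -> opposite_flag s (map perp s).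
Proof.
move=> /allP nds; have opp A : A \in s ->
    (\rank A + \rank (perp A) = m)%N /\ opposite_sub A (perp A).
  by move=> sA; rewrite opposite_perp nds // mxrank_perp subnKC ?rank_leq_col.
split; first by rewrite size_map.
split=> [A sA | _ /mapP[A sA ->]]; last by exists A => //; apply: opp.
by exists (perp A); [apply: map_f | apply: opp].
Qed.

End SymplecticSpace.

Theorem lemma3p4 (F : fieldType) (n : nat) (J : 'M[F]_(2 * n)) :
  (1 <= n)%N -> alternating_nondeg J ->
  (forall U : 'M[F]_(2 * n), is_vertex U -> odd (\rank U) ->
     ~~ opposite_sub U (sp_polarity J U)) /\
  (forall U : 'M[F]_(2 * n), is_vertex U -> opposite_sub U (sp_polarity J U) ->
     exists s : seq 'M[F]_(2 * n),
       [/\ is_flag s,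
           perm_eq (map mxrank s) [seq (k.+1).*2 | k <- iota 0 n.-1],
           has (fun W => (W == U)%MS) s
         & opposite_flag s (map (sp_polarity J) s)]).
Proof.
move=> _ J_alt; split=> U vU; rewrite sp_polarityE opposite_perp //.
  by apply: contraL => /(nondeg_rank_even J_alt).
move=> ndU.
have [s [nds sorted_s Us rks]] := nondeg_flag_through J_alt (mul2n n) ndU vU.
exists s; split.
- rewrite /is_flag sorted_s andbT; apply/allP => W sW.
  have /mapP[k] : \rank W \in [seq (k.+1).*2 | k <- iota 0 n.-1].
    by rewrite -rks map_f.
  by rewrite mem_iota /is_vertex => /andP[_ lt_k] ->; lia.
- by rewrite rks.
- by apply/hasP; exists U; rewrite // !submx_refl.
- exact: opposite_flag_perp.
Qed.
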